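(* Let $\mathbb{K}\in\{\mathbb{R},\mathbb{C}\}$, let $\mathbf{R}_U\in\mathbb{K}^{n\times n}$ be self-adjoint positive definite, and equip $U:=\mathbb{K}^n$ with $\langle \mathbf{x},\mathbf{y}\rangle_U:=\langle \mathbf{R}_U\mathbf{x},\mathbf{y}\rangle$. Fix $\mu$, $\mathbf{A}(\mu)\in\mathbb{K}^{n\times n}$, $\mathbf{u}(\mu)\in U$, and a subspace $U_r\subseteq U$ of dimension $r$ with a basis matrix $\mathbf{U}_r\in\mathbb{K}^{n\times r}$ (columns forming a basis of $U_r$). Define $\|\mathbf{y}\|_{U_r'}:=\max_{\mathbf{w}\in U_r\setminus\{\mathbf{0}\}}|\langle\mathbf{y},\mathbf{w}\rangle|/\|\mathbf{w}\|_U$, $\alpha_r(\mu):=\min_{\mathbf{x}\in U_r\setminus\{\mathbf{0}\}}\|\mathbf{A}(\mu)\mathbf{x}\|_{U_r'}/\|\mathbf{x}\|_U$ and $\beta_r(\mu):=\max_{\mathbf{x}\in(\mathrm{span}\{\mathbf{u}(\mu)\}+U_r)\setminus\{\mathbf{0}\}}\|\mathbf{A}(\mu)\mathbf{x}\|_{U_r'}/\|\mathbf{x}\|_U$. If the columns of $\mathbf{U}_r$ are orthonormal with respect to $\langle\cdot,\cdot\rangle_U$, then the condition number of $\mathbf{A}_r(\mu):=\mathbf{U}_r^{\mathrm{H}}\mathbf{A}(\mu)\mathbf{U}_r\in\mathbb{K}^{r\times r}$ is bounded by $\beta_r(\mu)/\alpha_r(\mu)$.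
   Context: $\langle\mathbf{x},\mathbf{y}\rangle=\mathbf{x}^{\mathrm{H}}\mathbf{y}$ is the canonical inner product; $\|\cdot\|_U$ is the norm induced by $\langle\cdot,\cdot\rangle_U$. The condition number of a square matrix is the ratio of its largest to smallest singular value (with respect to the Euclidean norm). *)

(* R : realType (mathcomp-analysis reals), scalars in the
   complex field R[i] (mathcomp-real-closed); K = R is modelled by a flag
   restricting all data to real entries. *)
From HB Require Import structures.
From mathcomp Require Import all_boot all_order all_algebra.
From mathcomp Require Import classical_sets reals.
From mathcomp Require Import complex.
Set Implicit Arguments. Unset Strict Implicit. Unset Printing Implicit Defensive.
Import Order.TTheory GRing.Theory Num.Theory.
Local Open Scope ring_scope.
Local Open Scope classical_set_scope.

Section Defs.
Variable R : realType.
Local Notation C := R[i].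

Definition Kscal (Kreal : bool) (z : C) : bool := Kreal ==> (complex.Im z == 0).
Definition Kmx (Kreal : bool) m k (M : 'M[C]_(m, k)) : bool :=
  [forall i, forall j, Kscal Kreal (M i j)].

Definition hadj m k (M : 'M[C]_(m, k)) : 'M[C]_(k, m) :=
  (map_mx (fun z => conjc z) M)^T.

Definition ip n (x y : 'cV[C]_n) : C := (hadj x *m y) 0 0.
Definition ipU n (RU : 'M[C]_n) (x y : 'cV[C]_n) : C := ip (RU *m x) y.
Definition normU n (RU : 'M[C]_n) (x : 'cV[C]_n) : R :=
  Num.sqrt (complex.Re (ipU RU x x)).
Definition cabs (z : C) : R := Normc.normc z.

Definition in_Ur (Kreal : bool) n r (Ur : 'M[C]_(n, r)) (w : 'cV[C]_n) : Prop :=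
  exists c : 'cV[C]_r, Kmx Kreal c /\ w = Ur *m c.
Definition in_uUr (Kreal : bool) n r (u : 'cV[C]_n) (Ur : 'M[C]_(n, r))
  (x : 'cV[C]_n) : Prop :=
  exists (t : C) (c : 'cV[C]_r), Kscal Kreal t /\ Kmx Kreal c /\ x = t *: u + Ur *m c.

Definition dualnorm (Kreal : bool) n r (RU : 'M[C]_n) (Ur : 'M[C]_(n, r))
  (y : 'cV[C]_n) : R :=
  sup [set cabs (ip y w) / normU RU w | w in [set w | in_Ur Kreal Ur w /\ w != 0]].

Definition alpha_r (Kreal : bool) n r (RU A : 'M[C]_n) (Ur : 'M[C]_(n, r)) : R :=
  inf [set dualnorm Kreal RU Ur (A *m x) / normU RU x
      | x in [set x | in_Ur Kreal Ur x /\ x != 0]].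

Definition beta_r (Kreal : bool) n r (RU A : 'M[C]_n) (u : 'cV[C]_n)
  (Ur : 'M[C]_(n, r)) : R :=
  sup [set dualnorm Kreal RU Ur (A *m x) / normU RU x
      | x in [set x | in_uUr Kreal u Ur x /\ x != 0]].

Definition singvals r (M : 'M[C]_r) : set R :=
  [set s | 0 <= s /\ eigenvalue (hadj M *m M) (real_complex R (s ^+ 2))].
Definition cond_number r (M : 'M[C]_r) : R :=
  sup (singvals M) / inf (singvals M).

End Defs.

From HB Require Import structures.
From mathcomp Require Import all_boot all_order all_algebra.
From mathcomp Require Import classical_sets reals.
From mathcomp Require Import complex.
From mathcomp Require Import sesquilinear spectral.
Import Order.TTheory GRing.Theory Num.Theory.
Set Implicit Arguments. Unset Strict Implicit. Unset Printing Implicit Defensive.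
Local Open Scope ring_scope.
Local Open Scope complex_scope.
Local Open Scope classical_set_scope.

(* Since the columns of [Ur] are [U]-orthonormal, [||Ur c||_U = |c|] and, for
   a [K]-vector [y], [||y||_{U_r'} = |Ur^H y|]; so at [x = Ur c] the quotient
   [||A x||_{U_r'} / ||x||_U] equals [|A_r c| / |c|].  A right singular vector
   of [A_r] can be chosen with entries in [K] (the Gram matrix [A_r^H A_r] is a
   [K]-matrix), hence every singular value lies between [alpha_r] and [beta_r].
   The quotient is bounded on [span{u} + U_r] because that space has a
   [U]-orthonormal basis, so [beta_r] is a genuine supremum.  If [A_r] is
   singular, [0] is a singular value, [alpha_r = 0], and both sides of the
   inequality are [0] by the convention [x / 0 = 0]; otherwise [alpha_r > 0]
   because [A_r^-1] is bounded. *)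

Section ConjugateTranspose.
Variable R : realType.
Local Notation C := R[i].

Lemma hadjK m k (M : 'M[C]_(m, k)) : hadj (hadj M) = M.
Proof. by apply/matrixP => i j; rewrite !mxE conjcK. Qed.

Lemma hadjM m k p (M : 'M[C]_(m, k)) (N : 'M[C]_(k, p)) :
  hadj (M *m N) = hadj N *m hadj M.
Proof.
apply/matrixP => i j; rewrite !mxE rmorph_sum; apply: eq_bigr => l _.
by rewrite !mxE rmorphM mulrC.
Qed.

Lemma hadjZ m k a (M : 'M[C]_(m, k)) : hadj (a *: M) = conjc a *: hadj M.
Proof. by apply/matrixP => i j; rewrite !mxE rmorphM. Qed.

Lemma hadj_row_mx m k1 k2 (M1 : 'M[C]_(m, k1)) (M2 : 'M[C]_(m, k2)) :
  hadj (row_mx M1 M2) = col_mx (hadj M1) (hadj M2).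
Proof. by rewrite /hadj map_row_mx tr_row_mx. Qed.

Lemma hadj_realmx m k (M : 'M[C]_(m, k)) : M \is a realmx -> hadj M = M^T.
Proof. by move=> Mreal; rewrite /hadj realmxC. Qed.

End ConjugateTranspose.

Section EuclideanNorm.
Variable R : realType.
Local Notation C := R[i].

Lemma ipZl k a (x y : 'cV[C]_k) : ip (a *: x) y = conjc a * ip x y.
Proof. by rewrite /ip hadjZ -scalemxAl mxE. Qed.

Lemma ipZr k a (x y : 'cV[C]_k) : ip x (a *: y) = a * ip x y.
Proof. by rewrite /ip -scalemxAr mxE. Qed.

Lemma ip_mulmxl k p (M : 'M[C]_(p, k)) (x : 'cV[C]_k) (y : 'cV[C]_p) :
  ip (M *m x) y = ip x (hadj M *m y).
Proof. by rewrite /ip hadjM mulmxA. Qed.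

Lemma ip_mulmxr k p (M : 'M[C]_(k, p)) (x : 'cV[C]_k) (y : 'cV[C]_p) :
  ip x (M *m y) = ip (hadj M *m x) y.
Proof. by rewrite ip_mulmxl hadjK. Qed.

Lemma ip_dotmx k (x y : 'cV[C]_k) : ip x y = dotmx y^T x^T.
Proof. by rewrite dotmxE /ip !mxE; apply: eq_bigr => l _; rewrite !mxE mulrC. Qed.

Lemma ip_ge0 k (x : 'cV[C]_k) : 0 <= ip x x.
Proof. by rewrite ip_dotmx dnorm_ge0. Qed.

Lemma ip_eq0 k (x : 'cV[C]_k) : (ip x x == 0) = (x == 0).
Proof. by rewrite ip_dotmx dnorm_eq0 -(inj_eq (@trmx_inj _ _ _)) trmx0. Qed.

Lemma sqr_sqrt_Re (z : C) : 0 <= z -> ((Num.sqrt (complex.Re z)) ^+ 2)%:C = z.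
Proof.
by case: z => a b; rewrite lecE /= => /andP[/eqP-> a_ge0]; rewrite sqr_sqrtr.
Qed.

Definition norm2 k (x : 'cV[C]_k) : R := Num.sqrt (complex.Re (ip x x)).

Lemma norm2_ge0 k (x : 'cV[C]_k) : 0 <= norm2 x.
Proof. exact: sqrtr_ge0. Qed.

Lemma ip_norm2 k (x : 'cV[C]_k) : ip x x = (norm2 x ^+ 2)%:C.
Proof. by rewrite sqr_sqrt_Re ?ip_ge0. Qed.

Lemma norm2_eq0 k (x : 'cV[C]_k) : (norm2 x == 0) = (x == 0).
Proof. by rewrite -ip_eq0 ip_norm2 (inj_eq (@complexI _)) sqrf_eq0. Qed.

Lemma norm2_0 k : norm2 (0 : 'cV[C]_k) = 0.
Proof. by apply/eqP; rewrite norm2_eq0. Qed.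

Lemma norm2_gt0 k (x : 'cV[C]_k) : (0 < norm2 x) = (x != 0).
Proof. by rewrite lt_def norm2_eq0 norm2_ge0 andbT. Qed.

Lemma normC_cabs (z : C) : `|z| = (cabs z)%:C.
Proof. by []. Qed.

Lemma cabs_ge0 (z : C) : 0 <= cabs z.
Proof. by case: z => a b; exact: sqrtr_ge0. Qed.

Lemma cabs_ip_self k (x : 'cV[C]_k) : cabs (ip x x) = norm2 x ^+ 2.
Proof. by apply: complexI; rewrite -normC_cabs ger0_norm ?ip_ge0 // ip_norm2. Qed.

Lemma cabs_ip_le k (x y : 'cV[C]_k) : cabs (ip x y) <= norm2 x * norm2 y.
Proof.
have sqrtC_ip (v : 'cV[C]_k) : sqrtC (dotmx v^T v^T) = (norm2 v)%:C.
  by rewrite -ip_dotmx ip_norm2 rmorphXn sqrCK // ler0c norm2_ge0.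
rewrite -lecR rmorphM /= -normC_cabs -!sqrtC_ip ip_dotmx mulrC.
exact: (CauchySchwarz_sqrt (@dotmx C k) _ _).1.
Qed.

Lemma norm2_sqr_sum k (x : 'cV[C]_k) : norm2 x ^+ 2 = \sum_i cabs (x i 0) ^+ 2.
Proof.
apply: complexI; rewrite -ip_norm2 /ip mxE rmorph_sum; apply: eq_bigr => i _.
by rewrite rmorphXn /= -normC_cabs normCK !mxE mulrC.
Qed.

Lemma norm2_mulmx_le p k (M : 'M[C]_(p, k)) :
  exists2 K, 0 <= K & forall x, norm2 (M *m x) <= K * norm2 x.
Proof.
pose K2 := \sum_i norm2 (hadj (row i M)) ^+ 2.
have K2_ge0 : 0 <= K2 by apply: sumr_ge0 => i _; exact: sqr_ge0.
exists (Num.sqrt K2) => [|x]; first exact: sqrtr_ge0.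
have bound2 : norm2 (M *m x) ^+ 2 <= K2 * norm2 x ^+ 2.
  rewrite norm2_sqr_sum mulr_suml; apply: ler_sum => i _.
  have -> : (M *m x) i 0 = ip (hadj (row i M)) x.
    by rewrite /ip hadjK !mxE; apply: eq_bigr => j _; rewrite !mxE.
  by rewrite -exprMn ler_sqr ?nnegrE ?cabs_ip_le ?cabs_ge0 ?mulr_ge0 ?norm2_ge0.
rewrite -ler_sqr ?nnegrE ?mulr_ge0 ?sqrtr_ge0 ?norm2_ge0 //.
by rewrite exprMn (sqr_sqrtr K2_ge0).
Qed.

End EuclideanNorm.

Section RealMatrices.
Variable R : realType.
Local Notation C := R[i].

Lemma KscalE (Kreal : bool) (z : C) : Kscal Kreal z = (Kreal ==> (z \is Num.real)).
Proof. by case: z => a b; rewrite /Kscal complex_real. Qed.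

Lemma KmxP (Kreal : bool) m k (M : 'M[C]_(m, k)) :
  reflect (Kreal -> M \is a realmx) (Kmx Kreal M).
Proof.
apply: (iffP forallP) => [KM Kr|KM i]; first apply/mxOverP => i j.
  by have /forallP/(_ j) := KM i; rewrite KscalE Kr.
by apply/forallP => j; rewrite KscalE; apply/implyP => /KM/mxOverP.
Qed.

Lemma Kmx_mul (Kreal : bool) m k p (M : 'M[C]_(m, k)) (N : 'M[C]_(k, p)) :
  Kmx Kreal M -> Kmx Kreal N -> Kmx Kreal (M *m N).
Proof. by move=> /KmxP KM /KmxP KN; apply/KmxP => Kr; rewrite mxOverM ?KM ?KN. Qed.

Lemma Kmx_sub (Kreal : bool) m k (M N : 'M[C]_(m, k)) :
  Kmx Kreal M -> Kmx Kreal N -> Kmx Kreal (M - N).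
Proof.
move=> /KmxP KM /KmxP KN; apply/KmxP => Kr; apply/mxOverP => i j.
by rewrite !mxE rpredB ?(mxOverP (KM Kr)) ?(mxOverP (KN Kr)).
Qed.

Lemma Kmx_hadj (Kreal : bool) m k (M : 'M[C]_(m, k)) :
  Kmx Kreal M -> Kmx Kreal (hadj M).
Proof.
move=> /KmxP KM; apply/KmxP => /KM Mreal; rewrite hadj_realmx //.
by apply/mxOverP => i j; rewrite mxE (mxOverP Mreal).
Qed.

Lemma Kmx_const (Kreal : bool) m k : Kmx Kreal (const_mx 1 : 'M[C]_(m, k)).
Proof. by apply/KmxP => _; rewrite mxOver_const ?rpred1. Qed.

End RealMatrices.

Lemma eigenvalue_col (F : fieldType) n (N : 'M[F]_n) a : eigenvalue N a ->
  exists2 v : 'cV_n, v != 0 & N *m v = a *: v.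
Proof.
move=> /eigenvalueP[w wN w_neq0].
have /det0P[v v_neq0 vN] : \det (a%:M - N)^T == 0.
  rewrite det_tr; apply/det0P; exists w => //.
  by rewrite mulmxBr wN mul_mx_scalar subrr.
exists v^T; first by rewrite -(inj_eq (@trmx_inj _ _ _)) trmxK trmx0.
apply/eqP; rewrite -subr_eq0 -mul_scalar_mx -mulmxBl -opprB mulNmx oppr_eq0.
by rewrite -(inj_eq (@trmx_inj _ _ _)) trmx_mul trmxK trmx0 vN.
Qed.

Lemma realmx_eigenvector (C : numClosedFieldType) n (N : 'M[C]_n) a (v : 'cV_n) :
  N \is a realmx -> a \is Num.real -> v != 0 -> N *m v = a *: v ->
  exists w : 'cV[C]_n, [/\ w \is a realmx, w != 0 & N *m w = a *: w].
Proof.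
move=> Nreal areal v_neq0 Nv.
have part_eigen (f : {additive C -> C}) :
    (forall x z, x \is Num.real -> f (x * z) = x * f z) ->
    N *m map_mx f v = a *: map_mx f v.
  move=> fMl; apply/matrixP => i j.
  have /matrixP/(_ i j) := Nv; rewrite !mxE => /(congr1 f).
  rewrite raddf_sum fMl // => <-; apply: eq_bigr => l _.
  by rewrite !mxE fMl // (mxOverP Nreal).
have [Re_eq0|Re_neq0] := eqVneq (map_mx (@Re C) v) 0; last first.
  exists (map_mx (@Re C) v); split => //.
    by apply/mxOverP => i j; rewrite mxE Creal_Re.
  by apply: part_eigen => x z x_real; exact: ReMl.
have [Im_eq0|Im_neq0] := eqVneq (map_mx (@Im C) v) 0; last first.
  exists (map_mx (@Im C) v); split => //.
    by apply/mxOverP => i j; rewrite mxE Creal_Im.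
  by apply: part_eigen => x z x_real; exact: ImMl.
case/negP: v_neq0; apply/eqP/matrixP => i j; rewrite [v i j]Crect mxE.
have /matrixP/(_ i j) := Re_eq0; have /matrixP/(_ i j) := Im_eq0.
by rewrite !mxE => -> ->; rewrite mulr0 addr0.
Qed.

Section SupInf.
Variable R : realType.

Lemma sup_ge0 (S : set R) : has_ubound S -> (forall s, S s -> 0 <= s) -> 0 <= sup S.
Proof.
move=> S_ub S_ge0; have [->|/set0P[s Ss]] := eqVneq S set0; first by rewrite sup0.
exact: le_trans (S_ge0 s Ss) (ub_le_sup S_ub Ss).
Qed.

Lemma inf_ge0 (S : set R) : (forall s, S s -> 0 <= s) -> 0 <= inf S.
Proof.
move=> S_ge0; have [->|S_neq0] := eqVneq S set0; first by rewrite inf0.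
by apply: lb_le_inf => //; exact/set0P.
Qed.

Lemma sup_div_inf_le (S : set R) a b : S !=set0 -> 0 <= a ->
  (forall s, S s -> a <= s <= b) -> 0 < a \/ S 0 -> sup S / inf S <= b / a.
Proof.
move=> S_neq0 a_ge0 S_ab a_gt0_or_S0.
have S_lb : lbound S a by move=> s /S_ab /andP[].
have S_ub : ubound S b by move=> s /S_ab /andP[].
have S_ge0 s : S s -> 0 <= s by move=> /S_lb; exact: le_trans.
case: a_gt0_or_S0 => [a_gt0|S0].
  have a_le_inf : a <= inf S := lb_le_inf S_neq0 S_lb.
  apply: le_trans (_ : sup S / a <= b / a).
    apply: ler_wpM2l; first exact: sup_ge0 (ex_intro _ b S_ub) S_ge0.
    by rewrite lef_pV2 ?posrE // (lt_le_trans a_gt0).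
  by apply: ler_wpM2r; [rewrite invr_ge0 | exact: ge_sup].
have infS0 : inf S = 0.
  apply/le_anti; rewrite ge_inf //; last by exists a.
  exact: lb_le_inf S_neq0 S_ge0.
by rewrite infS0 invr0 mulr0 divr_ge0 // S_ub.
Qed.

End SupInf.

Section SingularValues.
Variables (R : realType) (Kreal : bool) (r : nat) (M : 'M[R[i]]_r).
Hypothesis M_K : Kmx Kreal M.
Local Notation C := R[i].

Lemma ip_mulmx_gram (c : 'cV[C]_r) a : (hadj M *m M) *m c = a *: c ->
  ip (M *m c) (M *m c) = a * ip c c.
Proof. by rewrite ip_mulmxl mulmxA => ->; rewrite ipZr. Qed.

Lemma singvalsP s : singvals M s ->
  exists c : 'cV[C]_r, [/\ Kmx Kreal c, c != 0 & norm2 (M *m c) = s * norm2 c].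
Proof.
move=> [s_ge0 /eigenvalue_col[v v_neq0 Gv]].
have [c [c_K c_neq0 Gc]] : exists c : 'cV[C]_r,
    [/\ Kmx Kreal c, c != 0 & (hadj M *m M) *m c = (s ^+ 2)%:C *: c].
  have [Kr|nKr] := boolP Kreal; last by exists v; split => //; apply/KmxP.
  have /KmxP/(_ Kr) G_real : Kmx Kreal (hadj M *m M) by rewrite Kmx_mul ?Kmx_hadj.
  have [|w [w_real w_neq0 Gw]] := realmx_eigenvector G_real _ v_neq0 Gv.
    by rewrite complex_real.
  by exists w; split => //; apply/KmxP.
exists c; split => //; apply/eqP.
have := ip_mulmx_gram Gc; rewrite !ip_norm2 -rmorphM => /complexI/eqP.
by rewrite -exprMn eqrXn2 // ?mulr_ge0 ?norm2_ge0.
Qed.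

Lemma singvals_neq0 : (0 < r)%N -> singvals M !=set0.
Proof.
move=> r_gt0; have [a a_eig] := eigenvalue_closed (hadj M *m M) r_gt0.
have [v v_neq0 Gv] := eigenvalue_col a_eig.
have v_gt0 : 0 < norm2 v by rewrite norm2_gt0.
pose s := norm2 (M *m v) / norm2 v.
have a_eq : a = (s ^+ 2)%:C.
  apply: (mulIf (_ : ip v v != 0)); first by rewrite ip_eq0.
  by rewrite -ip_mulmx_gram // !ip_norm2 -rmorphM -exprMn divfK // gt_eqF.
exists s; split; first by rewrite divr_ge0 ?norm2_ge0.
by rewrite -a_eq.
Qed.

Lemma singvals0 : M \notin unitmx -> singvals M 0.
Proof.
move=> M_sing; split => //; rewrite expr0n /= eigenvalue_root_char rootE.
rewrite horner_coef0 char_poly_det det_mulmx.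
by move: M_sing; rewrite unitmxE unitfE negbK => /eqP->; rewrite !mulr0.
Qed.

End SingularValues.

Section GalerkinProjection.
Variables (R : realType) (Kreal : bool) (n r : nat).
Variables (RU A : 'M[R[i]]_n) (u : 'cV[R[i]]_n) (Ur : 'M[R[i]]_(n, r)).
Hypotheses (r_gt0 : (0 < r)%N) (RU_K : Kmx Kreal RU) (RU_sa : hadj RU = RU).
Hypothesis RU_pd : forall x : 'cV[R[i]]_n, Kmx Kreal x -> x != 0 -> 0 < ipU RU x x.
Hypotheses (A_K : Kmx Kreal A) (u_K : Kmx Kreal u) (Ur_K : Kmx Kreal Ur).
Hypothesis Ur_orth : hadj Ur *m RU *m Ur = 1%:M.
Local Notation C := R[i].
Local Notation M := (hadj Ur *m A *m Ur).
Local Notation ratio x := (dualnorm Kreal RU Ur (A *m x) / normU RU x).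
Local Notation alpha := (alpha_r Kreal RU A Ur).
Local Notation beta := (beta_r Kreal RU A u Ur).

Lemma ipU_mulmx p (W : 'M[C]_(n, p)) (c d : 'cV[C]_p) :
  ipU RU (W *m c) (W *m d) = ip c ((hadj W *m RU *m W) *m d).
Proof. by rewrite /ipU ip_mulmxl RU_sa ip_mulmxl !mulmxA. Qed.

Lemma ipUZ a (x : 'cV[C]_n) : ipU RU (a *: x) (a *: x) = conjc a * a * ipU RU x x.
Proof. by rewrite /ipU -scalemxAr ipZl ipZr mulrA. Qed.

Lemma normU_orthonormal p (W : 'M[C]_(n, p)) (c : 'cV[C]_p) :
  hadj W *m RU *m W = 1%:M -> normU RU (W *m c) = norm2 c.
Proof. by rewrite /normU ipU_mulmx => ->; rewrite mul1mx. Qed.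

Lemma mulmx_Ur_eq0 (c : 'cV[C]_r) : (Ur *m c == 0) = (c == 0).
Proof.
apply/eqP/eqP => [Urc0|->]; last exact: mulmx0.
by rewrite -[c]mul1mx -Ur_orth -mulmxA Urc0 mulmx0.
Qed.

Lemma dualnorm_ub (y : 'cV[C]_n) :
  ubound [set cabs (ip y w) / normU RU w | w in [set w | in_Ur Kreal Ur w /\ w != 0]]
    (norm2 (hadj Ur *m y)).
Proof.
move=> _ [_ [[c [_ ->]] /negbTE Urc_neq0] <-].
have c_gt0 : 0 < norm2 c by rewrite norm2_gt0 -mulmx_Ur_eq0 Urc_neq0.
by rewrite ip_mulmxr normU_orthonormal // ler_pdivrMr // cabs_ip_le.
Qed.

Lemma dualnorm_ge0 (y : 'cV[C]_n) : 0 <= dualnorm Kreal RU Ur y.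
Proof.
apply: sup_ge0; first by exists (norm2 (hadj Ur *m y)); exact: dualnorm_ub.
by move=> _ [w _ <-]; rewrite divr_ge0 ?cabs_ge0 ?sqrtr_ge0.
Qed.

Lemma dualnorm_le (y : 'cV[C]_n) : dualnorm Kreal RU Ur y <= norm2 (hadj Ur *m y).
Proof.
rewrite /dualnorm; set S := [set _ | _ in _].
have [->|/set0P S_neq0] := eqVneq S set0; first by rewrite sup0 norm2_ge0.
exact: ge_sup S_neq0 (@dualnorm_ub y).
Qed.

(* The supremum is attained at [w = Ur *m (hadj Ur *m y)], which lies in [U_r]
   only when [y] is a [K]-vector. *)
Lemma dualnorm_Kmx (y : 'cV[C]_n) :
  Kmx Kreal y -> dualnorm Kreal RU Ur y = norm2 (hadj Ur *m y).
Proof.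
move=> y_K; apply/le_anti; rewrite dualnorm_le /=.
set z := hadj Ur *m y; have [z0|z_neq0] := eqVneq z 0.
  by rewrite z0 norm2_0 dualnorm_ge0.
apply: ub_le_sup; first by exists (norm2 z); exact: dualnorm_ub.
exists (Ur *m z).
  by split; [exists z; rewrite Kmx_mul ?Kmx_hadj | rewrite mulmx_Ur_eq0].
by rewrite ip_mulmxr normU_orthonormal // cabs_ip_self expr2 mulfK // norm2_eq0.
Qed.

Lemma ratio_ge0 (x : 'cV[C]_n) : 0 <= ratio x.
Proof. by rewrite divr_ge0 ?dualnorm_ge0 ?sqrtr_ge0. Qed.

Lemma ratio_Ur (c : 'cV[C]_r) :
  Kmx Kreal c -> ratio (Ur *m c) = norm2 (M *m c) / norm2 c.
Proof.
by move=> c_K; rewrite normU_orthonormal // dualnorm_Kmx ?mulmxA // !Kmx_mul.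
Qed.

Lemma alpha_ge0 : 0 <= alpha.
Proof. by apply: inf_ge0 => _ [x _ <-]; exact: ratio_ge0. Qed.

Lemma alpha_le (c : 'cV[C]_r) :
  Kmx Kreal c -> c != 0 -> alpha <= norm2 (M *m c) / norm2 c.
Proof.
move=> c_K c_neq0; apply: ge_inf; first by exists 0 => _ [x _ <-]; exact: ratio_ge0.
by exists (Ur *m c); [split; [exists c | rewrite mulmx_Ur_eq0] | exact: ratio_Ur].
Qed.

Lemma alpha_gt0 : M \in unitmx -> 0 < alpha.
Proof.
move=> M_unit; have [K K_ge0 MinvK] := norm2_mulmx_le (invmx M).
have K1_gt0 : 0 < K + 1 by rewrite (le_lt_trans K_ge0) // ltrDl ltr01.
apply: lt_le_trans (_ : (K + 1)^-1 <= alpha); first by rewrite invr_gt0.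
apply: lb_le_inf.
  have one_neq0 : const_mx 1 != 0 :> 'cV[C]_r.
    by apply/eqP => /matrixP/(_ (Ordinal r_gt0) 0)/eqP; rewrite !mxE oner_eq0.
  apply: image_nonempty; exists (Ur *m const_mx 1).
  by split; [exists (const_mx 1); rewrite Kmx_const | rewrite mulmx_Ur_eq0].
move=> _ [_ [[c [c_K ->]] Urc_neq0] <-]; rewrite ratio_Ur //.
have c_gt0 : 0 < norm2 c by rewrite norm2_gt0 -mulmx_Ur_eq0.
rewrite ler_pdivlMr // ler_pdivrMl // -{1}(mulKmx M_unit c).
apply: le_trans (MinvK _) _; rewrite ler_wpM2r ?norm2_ge0 //.
by rewrite lerDl ler01.
Qed.

Lemma orthonormal_row_mx p (W : 'M[C]_(n, p)) (q : 'cV[C]_n) :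
  hadj W *m RU *m W = 1%:M -> hadj W *m RU *m q = 0 -> ipU RU q q = 1 ->
  hadj (row_mx W q) *m RU *m row_mx W q = 1%:M.
Proof.
move=> W_orth Wq0 q_unit.
have qW0 : hadj q *m RU *m W = 0.
  have -> : hadj q *m RU *m W = hadj (hadj W *m RU *m q).
    by rewrite !hadjM hadjK RU_sa mulmxA.
  by rewrite Wq0; apply/matrixP => i j; rewrite !mxE conjc0.
have qq1 : hadj q *m RU *m q = 1%:M.
  by rewrite [LHS]mx11_scalar -q_unit /ipU /ip hadjM RU_sa.
rewrite hadj_row_mx mul_col_mx mul_col_row W_orth Wq0 qW0 qq1.
by rewrite [RHS]scalar_mx_block.
Qed.

Lemma span_u_Ur_orthonormal : exists p (W : 'M[C]_(n, p)),
  hadj W *m RU *m W = 1%:M /\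
  forall x, in_uUr Kreal u Ur x -> exists c, x = W *m c.
Proof.
(* One Gram-Schmidt step: [e] is the component of [u] that is [U]-orthogonal
   to [U_r]; if it is nonzero, its normalization extends [Ur]. *)
pose g := hadj Ur *m RU *m u; pose e := u - Ur *m g.
have Ure0 : hadj Ur *m RU *m e = 0 by rewrite mulmxBr mulmxA Ur_orth mul1mx subrr.
have x_dec t c : t *: u + Ur *m c = Ur *m (t *: g + c) + t *: e.
  by rewrite mulmxDr -scalemxAr /e scalerBr addrAC subrKC.
have [e0|e_neq0] := eqVneq e 0.
  exists r, Ur; split => // _ [t [c [_ [_ ->]]]].
  by exists (t *: g + c); rewrite x_dec e0 scaler0 addr0.
have e_K : Kmx Kreal e by rewrite Kmx_sub ?Kmx_mul ?Kmx_hadj.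
have ee_gt0 := RU_pd e_K e_neq0; pose nu := normU RU e.
have ee_nu : ipU RU e e = (nu ^+ 2)%:C by rewrite sqr_sqrt_Re ?ltW.
have nu_gt0 : 0 < nu by rewrite sqrtr_gt0; move: ee_gt0; rewrite ltcE => /andP[].
pose q := (nu^-1)%:C *: e.
exists (r + 1)%N, (row_mx Ur q); split.
  apply: orthonormal_row_mx => //; first by rewrite -scalemxAr Ure0 scaler0.
  rewrite ipUZ conjc_real ee_nu -!rmorphM -expr2 -exprMn mulVf ?gt_eqF //.
  by rewrite expr1n.
move=> _ [t [c [_ [_ ->]]]]; exists (col_mx (t *: g + c) (t * nu%:C)%:M).
rewrite mul_row_col mul_mx_scalar x_dec scalerA -mulrA -rmorphM.
by rewrite divff ?gt_eqF // mulr1.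
Qed.

Lemma ratio_orthonormal_bounded p (W : 'M[C]_(n, p)) :
  hadj W *m RU *m W = 1%:M -> exists K, forall c, ratio (W *m c) <= K.
Proof.
move=> W_orth; have [K K_ge0 UrAW_K] := norm2_mulmx_le (hadj Ur *m A *m W).
exists K => c; rewrite normU_orthonormal //.
have [->|c_neq0] := eqVneq c 0; first by rewrite norm2_0 invr0 mulr0.
rewrite ler_pdivrMr ?norm2_gt0 //; apply: le_trans (dualnorm_le _) _.
by rewrite !mulmxA; exact: UrAW_K.
Qed.

Lemma beta_bounded :
  has_ubound [set ratio x | x in [set x | in_uUr Kreal u Ur x /\ x != 0]].
Proof.
have [p [W [W_orth span_W]]] := span_u_Ur_orthonormal.
have [K W_K] := ratio_orthonormal_bounded W_orth.
by exists K => _ [x [/span_W[c ->] _] <-].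
Qed.

Lemma beta_ge (c : 'cV[C]_r) :
  Kmx Kreal c -> c != 0 -> norm2 (M *m c) / norm2 c <= beta.
Proof.
move=> c_K c_neq0; rewrite -ratio_Ur //; apply: (ub_le_sup beta_bounded).
exists (Ur *m c) => //; split; last by rewrite mulmx_Ur_eq0.
exists 0, c; split; first by rewrite KscalE rpred0 implybT.
by rewrite scale0r add0r.
Qed.

Lemma singvals_bounds s : singvals M s -> alpha <= s <= beta.
Proof.
have M_K : Kmx Kreal M by rewrite !Kmx_mul ?Kmx_hadj.
move=> /(singvalsP M_K)[c [c_K c_neq0 Mc]].
have -> : s = norm2 (M *m c) / norm2 c by rewrite Mc mulfK // norm2_eq0.
by rewrite alpha_le ?beta_ge.
Qed.

End GalerkinProjection.

Theorem proposition2p2 (R : realType) (Kreal : bool) (n r : nat)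
  (RU : 'M[R[i]]_n) (A : 'M[R[i]]_n) (u : 'cV[R[i]]_n) (Ur : 'M[R[i]]_(n, r))
  (hr : (0 < r)%N)
  (hRU_K : Kmx Kreal RU) (hRU_sa : hadj RU = RU)
  (hRU_pd : forall x : 'cV[R[i]]_n, Kmx Kreal x -> x != 0 -> 0 < ipU RU x x)
  (hA_K : Kmx Kreal A) (hu_K : Kmx Kreal u) (hUr_K : Kmx Kreal Ur)
  (hUr_basis : forall c : 'cV[R[i]]_r, Kmx Kreal c -> Ur *m c = 0 -> c = 0)
  (hUr_orth : hadj Ur *m RU *m Ur = 1%:M) :
  cond_number (hadj Ur *m A *m Ur)
    <= beta_r Kreal RU A u Ur / alpha_r Kreal RU A Ur.
Proof.
apply: sup_div_inf_le.
- exact: singvals_neq0.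
- exact: alpha_ge0.
- by move=> s; apply: singvals_bounds.
- have [M_unit|M_sing] := boolP (hadj Ur *m A *m Ur \in unitmx).
  + by left; apply: alpha_gt0.
  + by right; apply: singvals0.
Qed.
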